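(* Let $\mathcal C$ be a semi-abelian category, $\partial\colon X\to B$ a regular epimorphism, and $\xi\colon B\flat X\to X$ an internal action such that $\xi\circ(\partial\flat 1_X)=\chi_X$. Then $(\partial,\xi)$ satisfies both the Precrossed Module Condition $[\partial,1_B]_\xi=0$ and the Peiffer Condition $[k,e\circ\partial]_{\chi_X}=0$; in particular $(\partial,\xi)$ is an internal precrossed module, and it satisfies $\partial\circ\xi=\chi_B\circ(1_B\flat\partial)$.
   Context: In a semi-abelian category, for objects $B,X$ let $\kappa_{B,X}\colon B\flat X\to B+X$ be the kernel of $\langle 1_B,0\rangle\colon B+X\to B$; $\flat$ is a bifunctor with $g\flat f$ the restriction of $g+f$. An internal action $\xi\colon B\flat X\to X$ (satisfying the standard Bourn–Janelidze axioms) induces via the semi-direct product construction a split short exact sequence $0\to X\xrightarrow{k}X\rtimes_\xi B\xrightarrow{d}B\to0$ with section $e$. The conjugation action of an object $Y$ on itself is $\chi_Y=\langle1_Y,1_Y\rangle\circ\kappa_{Y,Y}$, corresponding to the split short exact sequence $Y\xrightarrow{(1_Y,0)}Y\times Y\xrightarrow{\pi_2}Y$ with section $\Delta_Y$. For an action $\xi$ with sequence $(k,d,e)$ and $f\colon X\to Y$, $g\colon B\to Y$, the $\xi$-commutator $[f,g]_\xi\le Y$ is the regular image of $\langle f,g\rangle\circ\kappa$ where $\kappa$ is the kernel of $\langle k,e\rangle\colon X+B\to X\rtimes_\xi B$. $(\partial,\xi)$ is an internal precrossed module if there is $c\colon X\rtimes_\xi B\to B$ with $c\circ e=1_B$ and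 $c\circ k=\partial$. *)

Set Implicit Arguments.
Unset Strict Implicit.

Record Category := {
  ob :> Type;
  hom : ob -> ob -> Type;
  comp : forall a b c : ob, hom b c -> hom a b -> hom a c;
  idm : forall a : ob, hom a a;
  comp_assoc : forall (a b c d : ob) (h : hom c d) (g : hom b c) (f : hom a b),
      comp h (comp g f) = comp (comp h g) f;
  comp_id_l : forall (a b : ob) (f : hom a b), comp (idm b) f = f;
  comp_id_r : forall (a b : ob) (f : hom a b), comp f (idm a) = f
}.
Arguments hom {C} _ _ : rename.
Arguments comp {C a b c} _ _ : rename.
Arguments idm {C} a : rename.

Notation "g ∘ f" := (comp g f) (at level 40, left associativity).

Section CatDefs.
Variable C : Category.

Definition is_mono {a b : C} (m : hom a b) : Prop :=
  forall (t : C) (x y : hom t a), m ∘ x = m ∘ y -> x = y.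

Definition is_iso {a b : C} (f : hom a b) : Prop :=
  exists g : hom b a, g ∘ f = idm a /\ f ∘ g = idm b.

Definition is_zero_object (z : C) : Prop :=
  (forall a : C, exists! f : hom a z, True) /\ (forall a : C, exists! f : hom z a, True).

Definition is_pullback {a b c P : C} (f : hom a c) (g : hom b c)
    (p1 : hom P a) (p2 : hom P b) : Prop :=
  f ∘ p1 = g ∘ p2 /\
  forall (Q : C) (q1 : hom Q a) (q2 : hom Q b), f ∘ q1 = g ∘ q2 ->
    exists! h : hom Q P, p1 ∘ h = q1 /\ p2 ∘ h = q2.

Definition is_kernel_pair {a b R : C} (f : hom a b) (r1 r2 : hom R a) : Prop :=
  is_pullback f f r1 r2.

Definition is_coequalizer {a b c : C} (f g : hom a b) (q : hom b c) : Prop :=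
  q ∘ f = q ∘ g /\
  forall (d : C) (h : hom b d), h ∘ f = h ∘ g -> exists! u : hom c d, u ∘ q = h.

Definition is_regular_epi {b c : C} (q : hom b c) : Prop :=
  exists (a : C) (f g : hom a b), is_coequalizer f g q.

Definition is_equiv_rel {R A : C} (r1 r2 : hom R A) : Prop :=
  (forall (t : C) (x y : hom t R), r1 ∘ x = r1 ∘ y -> r2 ∘ x = r2 ∘ y -> x = y) /\
  (exists d : hom A R, r1 ∘ d = idm A /\ r2 ∘ d = idm A) /\
  (exists s : hom R R, r1 ∘ s = r2 /\ r2 ∘ s = r1) /\
  (forall (P : C) (p1 p2 : hom P R), is_pullback r2 r1 p1 p2 ->
     exists t : hom P R, r1 ∘ t = r1 ∘ p1 /\ r2 ∘ t = r2 ∘ p2).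

End CatDefs.

Record PCat := {
  pc_cat :> Category;
  zob : pc_cat;
  to_zero : forall a : pc_cat, hom a zob;
  from_zero : forall a : pc_cat, hom zob a;
  to_zero_uniq : forall (a : pc_cat) (f : hom a zob), f = to_zero a;
  from_zero_uniq : forall (a : pc_cat) (f : hom zob a), f = from_zero a;
  prod : pc_cat -> pc_cat -> pc_cat;
  pr1 : forall a b : pc_cat, hom (prod a b) a;
  pr2 : forall a b : pc_cat, hom (prod a b) b;
  pair : forall (t a b : pc_cat), hom t a -> hom t b -> hom t (prod a b);
  pair_pr1 : forall t a b (f : hom t a) (g : hom t b), pr1 a b ∘ pair f g = f;
  pair_pr2 : forall t a b (f : hom t a) (g : hom t b), pr2 a b ∘ pair f g = g;
  pair_uniq : forall t a b (h : hom t (prod a b)),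
      h = pair (pr1 a b ∘ h) (pr2 a b ∘ h);
  coprod : pc_cat -> pc_cat -> pc_cat;
  inl : forall a b : pc_cat, hom a (coprod a b);
  inr : forall a b : pc_cat, hom b (coprod a b);
  copair : forall (a b t : pc_cat), hom a t -> hom b t -> hom (coprod a b) t;
  copair_inl : forall a b t (f : hom a t) (g : hom b t), copair f g ∘ inl a b = f;
  copair_inr : forall a b t (f : hom a t) (g : hom b t), copair f g ∘ inr a b = g;
  copair_uniq : forall a b t (h : hom (coprod a b) t),
      h = copair (h ∘ inl a b) (h ∘ inr a b);
  ker : forall a b : pc_cat, hom a b -> pc_cat;
  kerm : forall (a b : pc_cat) (f : hom a b), hom (ker f) a;
  kerm_zero : forall a b (f : hom a b), f ∘ kerm f = from_zero b ∘ to_zero (ker f);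
  ker_lift : forall (a b : pc_cat) (f : hom a b) (t : pc_cat) (g : hom t a),
      f ∘ g = from_zero b ∘ to_zero t -> hom t (ker f);
  ker_lift_spec : forall a b (f : hom a b) t (g : hom t a) (H : f ∘ g = from_zero b ∘ to_zero t),
      kerm f ∘ ker_lift H = g;
  kerm_mono : forall a b (f : hom a b), is_mono (kerm f)
}.
Arguments zob {p}.
Arguments to_zero {p} a.
Arguments from_zero {p} a.
Arguments prod {p} _ _.
Arguments coprod {p} _ _.
Arguments pr1 {p} a b.
Arguments pr2 {p} a b.
Arguments pair {p t a b} _ _.
Arguments inl {p} a b.
Arguments inr {p} a b.
Arguments copair {p a b t} _ _.
Arguments ker {p a b} _.
Arguments kerm {p a b} _.
Arguments ker_lift {p a b f t g} _.

Section PDefs.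
Variable C : PCat.

Definition zmor (a b : C) : hom a b := from_zero b ∘ to_zero a.

Definition is_kernel {K A B : C} (k : hom K A) (f : hom A B) : Prop :=
  f ∘ k = zmor K B /\
  forall (t : C) (g : hom t A), f ∘ g = zmor t B -> exists! h : hom t K, k ∘ h = g.

Definition coprod_map {B B' X X' : C} (g : hom B B') (f : hom X X') :
  hom (coprod B X) (coprod B' X') := copair (inl B' X' ∘ g) (inr B' X' ∘ f).

Definition proj_act (B X : C) : hom (coprod B X) B := copair (idm B) (zmor X B).

Definition flat (B X : C) : C := ker (proj_act B X).
Definition kappa (B X : C) : hom (flat B X) (coprod B X) := kerm (proj_act B X).

Lemma zmor_comp_l (a b c : C) (h : hom b c) : h ∘ zmor a b = zmor a c.
Proof.
  unfold zmor. rewrite comp_assoc. f_equal. apply from_zero_uniq.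
Qed.

Lemma zmor_comp_r (a b c : C) (h : hom a b) : zmor b c ∘ h = zmor a c.
Proof.
  unfold zmor. rewrite <- comp_assoc. f_equal. apply to_zero_uniq.
Qed.

Lemma comp_copair (a b t s : C) (f : hom a t) (g : hom b t) (h : hom t s) :
  h ∘ copair f g = copair (h ∘ f) (h ∘ g).
Proof.
  rewrite (copair_uniq (h ∘ copair f g)).
  rewrite <- !comp_assoc, copair_inl, copair_inr. reflexivity.
Qed.

Lemma copair_comp_map (B B' X X' T : C) (g : hom B B') (f : hom X X')
  (u : hom B' T) (v : hom X' T) :
  copair u v ∘ coprod_map g f = copair (u ∘ g) (v ∘ f).
Proof.
  unfold coprod_map. rewrite comp_copair, !comp_assoc, copair_inl, copair_inr.
  reflexivity.
Qed.

Lemma flat_map_ok (B B' X X' : C) (g : hom B B') (f : hom X X') :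
  proj_act B' X' ∘ (coprod_map g f ∘ kappa B X) = zmor (flat B X) B'.
Proof.
  unfold proj_act, kappa.
  rewrite comp_assoc, copair_comp_map, comp_id_l, zmor_comp_r.
  assert (E : copair g (zmor X B') = g ∘ copair (idm B) (zmor X B)).
  { rewrite comp_copair, comp_id_r, zmor_comp_l. reflexivity. }
  rewrite E, <- comp_assoc. change (copair (idm B) (zmor X B)) with (proj_act B X).
  unfold flat. rewrite kerm_zero. exact (zmor_comp_l _ g).
Qed.

Definition flat_map {B B' X X' : C} (g : hom B B') (f : hom X X') :
  hom (flat B X) (flat B' X') := ker_lift (flat_map_ok g f).

Lemma eta_ok (B X : C) : proj_act B X ∘ inr B X = zmor X B.
Proof. unfold proj_act. apply copair_inr. Qed.

Definition act_eta (B X : C) : hom X (flat B X) := ker_lift (eta_ok B X).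

Lemma mu_ok (B X : C) :
  proj_act B X ∘ (copair (inl B X) (kappa B X) ∘ kappa B (flat B X))
  = zmor (flat B (flat B X)) B.
Proof.
  rewrite comp_assoc, comp_copair.
  unfold proj_act at 1. rewrite copair_inl.
  unfold kappa, flat. rewrite kerm_zero. fold (zmor (ker (proj_act B X)) B).
  change (copair (idm B) (zmor (ker (proj_act B X)) B)) with (proj_act B (ker (proj_act B X))).
  rewrite kerm_zero. reflexivity.
Qed.

Definition act_mu (B X : C) : hom (flat B (flat B X)) (flat B X) := ker_lift (mu_ok B X).

(* internal action (Bourn-Janelidze axioms: algebra for the monad B ♭ (-)) *)
Definition is_internal_action {B X : C} (xi : hom (flat B X) X) : Prop :=
  xi ∘ act_eta B X = idm X /\ xi ∘ act_mu B X = xi ∘ flat_map (idm B) xi.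

Definition chi (Y : C) : hom (flat Y Y) Y := copair (idm Y) (idm Y) ∘ kappa Y Y.

(* (k, d, e) : 0 -> X -> A -> B -> 0 is a split short exact sequence whose
   associated action is xi (i.e. A is (isomorphic to) the semidirect product
   X ⋊_xi B, with its canonical k, d, e). *)
Definition is_semidirect_product {B X A : C} (xi : hom (flat B X) X)
    (k : hom X A) (d : hom A B) (e : hom B A) : Prop :=
  is_kernel k d /\ d ∘ e = idm B /\ k ∘ xi = copair e k ∘ kappa B X.

Definition image_is_zero {a b : C} (phi : hom a b) : Prop :=
  forall (I : C) (q : hom a I) (m : hom I b),
    is_regular_epi q -> is_mono m -> m ∘ q = phi -> is_zero_object I.

Definition commutator_zero {X B A Y : C} (k : hom X A) (e : hom B A)
    (f : hom X Y) (g : hom B Y) : Prop :=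
  image_is_zero (copair f g ∘ kerm (copair k e)).

(* sequence of the conjugation action chi_Y : Y -(1,0)-> Y x Y -pi2-> Y, section Delta *)
Definition conj_k (Y : C) : hom Y (prod Y Y) := pair (idm Y) (zmor Y Y).
Definition conj_e (Y : C) : hom Y (prod Y Y) := pair (idm Y) (idm Y).

Definition is_precrossed_module {B X A : C} (partial : hom X B)
    (k : hom X A) (e : hom B A) : Prop :=
  exists c : hom A B, c ∘ e = idm B /\ c ∘ k = partial.

(* finite limits: zero (terminal) object, binary products, kernels (chosen)
   and pullbacks *)
Definition has_pullbacks : Prop :=
  forall (a b c : C) (f : hom a c) (g : hom b c),
    exists (P : C) (p1 : hom P a) (p2 : hom P b), is_pullback f g p1 p2.

Definition is_regular : Prop :=
  has_pullbacks /\
  (forall (a b R : C) (f : hom a b) (r1 r2 : hom R a), is_kernel_pair f r1 r2 ->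
     exists (c : C) (q : hom a c), is_coequalizer r1 r2 q) /\
  (forall (a b c P : C) (f : hom a c) (g : hom b c) (p1 : hom P a) (p2 : hom P b),
     is_pullback f g p1 p2 -> is_regular_epi g -> is_regular_epi p1).

Definition is_exact : Prop :=
  is_regular /\
  forall (R A : C) (r1 r2 : hom R A), is_equiv_rel r1 r2 ->
    exists (b : C) (f : hom A b), is_kernel_pair f r1 r2.

(* protomodularity (pointed form: split short five lemma) *)
Definition is_protomodular : Prop :=
  forall (K A B K' A' B' : C) (k : hom K A) (d : hom A B) (e : hom B A)
         (k' : hom K' A') (d' : hom A' B') (e' : hom B' A')
         (u : hom K K') (v : hom A A') (w : hom B B'),
    is_kernel k d -> d ∘ e = idm B ->
    is_kernel k' d' -> d' ∘ e' = idm B' ->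
    v ∘ k = k' ∘ u -> d' ∘ v = w ∘ d -> v ∘ e = e' ∘ w ->
    is_iso u -> is_iso w -> is_iso v.

End PDefs.

Record SemiAbelianCategory := {
  sa_pcat :> PCat;
  sa_exact : is_exact sa_pcat;
  sa_protomodular : is_protomodular sa_pcat
}.


(* Since [partial] is a regular epi, so is [flat_map partial (idm X)] (a consequence of
   protomodularity), and cancelling it from the hypothesis [xi ∘ (partial ♭ 1) = chi X]
   gives [partial ∘ xi = chi B ∘ (1 ♭ partial)].  The semidirect product is the quotient
   of [B + X] forcing [kappa = inr ∘ xi]; by this equivariance [copair 1 partial] descends
   to [c] with [c ∘ e = 1] and [c ∘ k = partial], which is the precrossed module structure
   and kills [[partial, 1]_xi].  Similarly the hypothesis makes [copair (e ∘ partial) k]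
   descend along the semidirect product [X × X] of the conjugation action, which kills the
   Peiffer commutator. *)

Set Implicit Arguments.
Unset Strict Implicit.

Section PointedCategory.
Variable C : PCat.

Lemma kerm_is_kernel (a b : C) (f : hom a b) : is_kernel (kerm f) f.
Proof.
  split; [exact (kerm_zero f)|].
  intros t g Hg. exists (ker_lift Hg). split; [apply ker_lift_spec|].
  intros h Hh. apply kerm_mono. rewrite ker_lift_spec. symmetry; exact Hh.
Qed.

Lemma kernel_mono (K A B : C) (k : hom K A) (d : hom A B) : is_kernel k d -> is_mono k.
Proof.
  intros [Hdk Hk] t x y Exy.
  assert (Hx : d ∘ (k ∘ x) = zmor t B) by (rewrite comp_assoc, Hdk; apply zmor_comp_r).
  destruct (Hk t (k ∘ x) Hx) as [h [_ Uh]].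
  rewrite <- (Uh x eq_refl), <- (Uh y (eq_sym Exy)). reflexivity.
Qed.

Lemma kernel_lift (K A B : C) (k : hom K A) (d : hom A B) (t : C) (g : hom t A) :
  is_kernel k d -> d ∘ g = zmor t B -> exists h : hom t K, k ∘ h = g.
Proof. intros [_ Hk] Hg. destruct (Hk t g Hg) as [h [Hh _]]. exists h; exact Hh. Qed.

Lemma pullback_ext (a b c P : C) (f : hom a c) (g : hom b c) (p1 : hom P a) (p2 : hom P b)
  (Q : C) (x y : hom Q P) :
  is_pullback f g p1 p2 -> p1 ∘ x = p1 ∘ y -> p2 ∘ x = p2 ∘ y -> x = y.
Proof.
  intros [Hfg Hpb] E1 E2.
  assert (Hx : f ∘ (p1 ∘ x) = g ∘ (p2 ∘ x)) by (rewrite !comp_assoc, Hfg; reflexivity).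
  destruct (Hpb Q (p1 ∘ x) (p2 ∘ x) Hx) as [h [_ Uh]].
  rewrite <- (Uh x (conj eq_refl eq_refl)), <- (Uh y (conj (eq_sym E1) (eq_sym E2))).
  reflexivity.
Qed.

Lemma pullback_lift (a b c P : C) (f : hom a c) (g : hom b c) (p1 : hom P a) (p2 : hom P b)
  (Q : C) (q1 : hom Q a) (q2 : hom Q b) :
  is_pullback f g p1 p2 -> f ∘ q1 = g ∘ q2 ->
  exists h : hom Q P, p1 ∘ h = q1 /\ p2 ∘ h = q2.
Proof. intros [_ Hpb] E. destruct (Hpb Q q1 q2 E) as [h [Hh _]]. exists h; exact Hh. Qed.

Lemma regular_epi_epi (b c : C) (q : hom b c) (t : C) (x y : hom c t) :
  is_regular_epi q -> x ∘ q = y ∘ q -> x = y.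
Proof.
  intros [a [f [g [Hfg Hq]]]] E.
  assert (Hx : (x ∘ q) ∘ f = (x ∘ q) ∘ g) by (rewrite <- !comp_assoc, Hfg; reflexivity).
  destruct (Hq t (x ∘ q) Hx) as [u [_ Uu]].
  rewrite <- (Uu x eq_refl), <- (Uu y (eq_sym E)). reflexivity.
Qed.

Lemma iso_comp_regular_epi (a b c : C) (p : hom a b) (m : hom b c) :
  is_regular_epi p -> is_iso m -> is_regular_epi (m ∘ p).
Proof.
  intros [z [f [g [Hfg Hp]]]] [mi [Hl Hr]].
  exists z, f, g. split; [rewrite <- !comp_assoc, Hfg; reflexivity|].
  intros t h Hh. destruct (Hp t h Hh) as [u [Hu Uu]].
  exists (u ∘ mi). split.
  - rewrite <- comp_assoc, (comp_assoc mi m p), Hl, comp_id_l. exact Hu.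
  - intros u' Hu'. assert (u = u' ∘ m) as -> by (apply Uu; rewrite <- comp_assoc; exact Hu').
    rewrite <- comp_assoc, Hr, comp_id_r. reflexivity.
Qed.

Lemma mono_factor_regular_epi_iso (a b c : C) (s : hom a b) (mu : hom b c) (l : hom a c) :
  is_mono mu -> is_regular_epi l -> mu ∘ s = l -> is_iso mu.
Proof.
  intros Hmu [z [f [g [Hfg Hl]]]] E.
  assert (Hs : s ∘ f = s ∘ g) by (apply Hmu; rewrite !comp_assoc, E; exact Hfg).
  destruct (Hl b s Hs) as [t [Ht _]].
  destruct (Hl c l Hfg) as [u [_ Uu]].
  assert (Hmut : mu ∘ t = idm c).
  { rewrite <- (Uu (mu ∘ t)), <- (Uu (idm c)); try reflexivity.
    - apply comp_id_l.
    - rewrite <- comp_assoc, Ht. exact E. }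
  exists t. split; [|exact Hmut].
  apply Hmu. rewrite comp_assoc, Hmut, comp_id_l, comp_id_r. reflexivity.
Qed.

Lemma is_iso_idm (a : C) : is_iso (idm a).
Proof. exists (idm a). split; apply comp_id_l. Qed.

Lemma zmor_image_zero (a b : C) : image_is_zero (zmor a b).
Proof.
  intros I q m [z [f [g [Hfg Hq]]]] Hm E.
  assert (Eq : q = zmor a I) by (apply Hm; rewrite E; symmetry; apply zmor_comp_l).
  destruct (Hq I q Hfg) as [u [_ Uu]].
  assert (Id : idm I = zmor I I).
  { rewrite <- (Uu (idm I)), <- (Uu (zmor I I)); try reflexivity.
    - rewrite Eq. apply zmor_comp_l.
    - apply comp_id_l. }
  split.
  - intros c. exists (zmor c I). split; [trivial|]. intros f' _.
    rewrite <- (comp_id_l f'), Id. symmetry. apply zmor_comp_r.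
  - intros c. exists (zmor I c). split; [trivial|]. intros f' _.
    rewrite <- (comp_id_r f'), Id. symmetry. apply zmor_comp_l.
Qed.

Lemma pair_ext (t a b : C) (x y : hom t (prod a b)) :
  pr1 a b ∘ x = pr1 a b ∘ y -> pr2 a b ∘ x = pr2 a b ∘ y -> x = y.
Proof. intros E1 E2. rewrite (pair_uniq x), (pair_uniq y), E1, E2. reflexivity. Qed.

Lemma copair_ext (a b t : C) (x y : hom (coprod a b) t) :
  x ∘ inl a b = y ∘ inl a b -> x ∘ inr a b = y ∘ inr a b -> x = y.
Proof. intros E1 E2. rewrite (copair_uniq x), (copair_uniq y), E1, E2. reflexivity. Qed.

Lemma commutator_zero_factor (X B A Y : C) (k : hom X A) (e : hom B A)
  (f : hom X Y) (g : hom B Y) (c : hom A Y) :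
  c ∘ k = f -> c ∘ e = g -> commutator_zero k e f g.
Proof.
  intros <- <-. unfold commutator_zero.
  rewrite <- comp_copair, <- comp_assoc, kerm_zero. fold (zmor (ker (copair k e)) A).
  rewrite zmor_comp_l. apply zmor_image_zero.
Qed.

Lemma flat_map_spec (B B' X X' : C) (g : hom B B') (f : hom X X') :
  kappa B' X' ∘ flat_map g f = coprod_map g f ∘ kappa B X.
Proof. apply ker_lift_spec. Qed.

Lemma chi_flat_map (B X : C) (f : hom X B) :
  chi B ∘ flat_map (idm B) f = copair (idm B) f ∘ kappa B X.
Proof.
  unfold chi. rewrite <- comp_assoc, flat_map_spec, comp_assoc, copair_comp_map, !comp_id_l.
  reflexivity.
Qed.

Lemma coprod_map_regular_epi (X B Y : C) (q : hom X B) :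
  is_regular_epi q -> is_regular_epi (coprod_map q (idm Y)).
Proof.
  intros [Z [a [b [Hab Hq]]]].
  exists (coprod Z Y), (coprod_map a (idm Y)), (coprod_map b (idm Y)). split.
  { unfold coprod_map at 1 3. rewrite !copair_comp_map, <- !comp_assoc, Hab. reflexivity. }
  intros T h Hh.
  assert (Ha : (h ∘ inl X Y) ∘ a = (h ∘ inl X Y) ∘ b).
  { assert (E := f_equal (fun x => x ∘ inl Z Y) Hh). simpl in E.
    unfold coprod_map in E. rewrite <- !comp_assoc, !copair_inl, !comp_assoc in E. exact E. }
  destruct (Hq T _ Ha) as [u [Hu Uu]].
  exists (copair u (h ∘ inr X Y)). split.
  { rewrite copair_comp_map, Hu, comp_id_r. symmetry. apply copair_uniq. }
  intros v Hv. unfold coprod_map in Hv. apply copair_ext.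
  - rewrite copair_inl. apply Uu. rewrite <- Hv, <- !comp_assoc, copair_inl. reflexivity.
  - rewrite copair_inr, <- Hv, <- !comp_assoc, copair_inr, comp_id_r. reflexivity.
Qed.

Lemma conj_is_semidirect_product (X : C) :
  is_semidirect_product (chi X) (conj_k X) (pr2 X X) (conj_e X).
Proof.
  unfold conj_k, conj_e. split; [|split; [apply pair_pr2|]].
  - split; [apply pair_pr2|].
    intros t g Hg. exists (pr1 X X ∘ g). split.
    + apply pair_ext.
      * rewrite comp_assoc, pair_pr1, comp_id_l. reflexivity.
      * rewrite comp_assoc, pair_pr2, Hg. apply zmor_comp_r.
    + intros h <-. rewrite comp_assoc, pair_pr1, comp_id_l. reflexivity.
  - unfold chi. apply pair_ext.
    + rewrite !comp_assoc, pair_pr1, comp_id_l, comp_copair, !pair_pr1. reflexivity.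
    + rewrite !comp_assoc, pair_pr2, !zmor_comp_r, comp_copair, !pair_pr2.
      symmetry. exact (kerm_zero (proj_act X X)).
Qed.

End PointedCategory.

Section RegularCategory.
Variable C : SemiAbelianCategory.

Lemma sa_pullback (a b c : C) (f : hom a c) (g : hom b c) :
  exists (P : C) (p1 : hom P a) (p2 : hom P b), is_pullback f g p1 p2.
Proof. destruct (sa_exact C) as [[H _] _]. apply H. Qed.

Lemma regular_epi_pullback (a b c P : C) (f : hom a c) (g : hom b c)
  (p1 : hom P a) (p2 : hom P b) :
  is_pullback f g p1 p2 -> is_regular_epi g -> is_regular_epi p1.
Proof. destruct (sa_exact C) as [[_ [_ H]] _]. apply H. Qed.

(* The coequalizer of the kernel pair of [g], followed by the induced map. *)
Lemma image_factorization (a b : C) (g : hom a b) :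
  exists (I : C) (p : hom a I) (m : hom I b), is_regular_epi p /\ is_mono m /\ m ∘ p = g.
Proof.
  destruct (sa_pullback g g) as [R [r1 [r2 HR]]].
  destruct (sa_exact C) as [[_ [Hcoeq _]] _].
  destruct (Hcoeq _ _ _ _ _ _ HR) as [I [p Hp]].
  assert (Rp : is_regular_epi p) by (exists R, r1, r2; exact Hp).
  destruct Hp as [Hr Hu]. destruct (Hu b g (proj1 HR)) as [m [Hm _]].
  exists I, p, m. split; [exact Rp|]. split; [|exact Hm].
  intros Z x y Exy.
  destruct (sa_pullback x p) as [Z1 [z1 [x1 H1]]].
  destruct (sa_pullback (y ∘ z1) p) as [Z2 [z2 [y2 H2]]].
  assert (E : g ∘ (x1 ∘ z2) = g ∘ y2).
  { rewrite <- Hm, !comp_assoc, <- (comp_assoc m p x1), <- (proj1 H1),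
      <- (comp_assoc m p y2), <- (proj1 H2), !comp_assoc, Exy. reflexivity. }
  destruct (pullback_lift HR E) as [t [Ht1 Ht2]].
  apply (regular_epi_epi (regular_epi_pullback H1 Rp)).
  apply (regular_epi_epi (regular_epi_pullback H2 Rp)).
  rewrite (proj1 H1), <- comp_assoc, <- Ht1, comp_assoc, Hr, <- comp_assoc, Ht2.
  symmetry. exact (proj1 H2).
Qed.

Lemma regular_epi_cancel_r (a b c : C) (f : hom a b) (g : hom b c) :
  is_regular_epi (g ∘ f) -> is_regular_epi g.
Proof.
  intros H. destruct (image_factorization g) as [I [p [m [Hp [Hm <-]]]]].
  apply iso_comp_regular_epi; [exact Hp|].
  apply (mono_factor_regular_epi_iso (s := p ∘ f) Hm H). apply comp_assoc.
Qed.

(* The square [k2 ∘ pi = p ∘ k1] is a pullback, so [pi] is a pullback of [p]. *)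
Lemma kernel_restriction_regular_epi (K1 E1 K2 E2 Z : C) (k1 : hom K1 E1) (d1 : hom E1 Z)
  (k2 : hom K2 E2) (d2 : hom E2 Z) (p : hom E1 E2) (pi : hom K1 K2) :
  is_kernel k1 d1 -> is_kernel k2 d2 -> d2 ∘ p = d1 -> k2 ∘ pi = p ∘ k1 ->
  is_regular_epi p -> is_regular_epi pi.
Proof.
  intros [_ Hk1] Hk2 Ed Ek Hp.
  apply (regular_epi_pullback (f := k2) (g := p) (p2 := k1)); [|exact Hp].
  split; [exact Ek|].
  intros Q q1 q2 Eq.
  assert (Hq2 : d1 ∘ q2 = zmor Q Z).
  { rewrite <- Ed, <- comp_assoc, <- Eq, comp_assoc, (proj1 Hk2). apply zmor_comp_r. }
  destruct (Hk1 Q q2 Hq2) as [h [Hh Uh]].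
  exists h. split.
  - split; [|exact Hh]. apply (kernel_mono Hk2). rewrite comp_assoc, Ek, <- comp_assoc, Hh.
    symmetry; exact Eq.
  - intros h' [_ Hh']. apply Uh. exact Hh'.
Qed.

End RegularCategory.

Section SemidirectProductFactor.
Variable C : SemiAbelianCategory.
Variables (B X A T : C) (xi : hom (flat B X) X) (k : hom X A) (d : hom A B) (e : hom B A)
  (h : hom (coprod B X) T).
Hypotheses (Hk : is_kernel k d) (Hde : d ∘ e = idm B)
  (Hxi : k ∘ xi = copair e k ∘ kappa B X) (Hh : h ∘ kappa B X = h ∘ inr B X ∘ xi).
Variables (R : C) (p : hom (coprod B X) R) (m : hom R (prod A T)).
Hypotheses (Hp : is_regular_epi p) (Hm : is_mono m) (Hmp : m ∘ p = pair (copair e k) h).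

Let q : hom R A := pr1 A T ∘ m.

Let Hqp : q ∘ p = copair e k.
Proof. unfold q. rewrite <- comp_assoc, Hmp. apply pair_pr1. Qed.

Let Hdqp : d ∘ q ∘ p = proj_act B X.
Proof. rewrite <- comp_assoc, Hqp, comp_copair, Hde, (proj1 Hk). reflexivity. Qed.

Lemma image_kernel_comparison_iso :
  exists u : hom (ker (d ∘ q)) X, is_iso u /\ k ∘ u = q ∘ kerm (d ∘ q).
Proof.
  assert (Hpi : (d ∘ q) ∘ (p ∘ kappa B X) = zmor (flat B X) B).
  { rewrite comp_assoc, Hdqp. exact (kerm_zero (proj_act B X)). }
  set (pi := ker_lift Hpi).
  assert (Epi : kerm (d ∘ q) ∘ pi = p ∘ kappa B X) by apply ker_lift_spec.
  assert (Rpi : is_regular_epi pi)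
    by exact (kernel_restriction_regular_epi
                (kerm_is_kernel _) (kerm_is_kernel _) Hdqp Epi Hp).
  assert (Hu : d ∘ (q ∘ kerm (d ∘ q)) = zmor _ B) by (rewrite comp_assoc; apply kerm_zero).
  destruct (kernel_lift Hk Hu) as [u Eu].
  assert (Hv : (d ∘ q) ∘ (p ∘ inr B X) = zmor X B) by (rewrite comp_assoc, Hdqp; apply eta_ok).
  set (v := ker_lift Hv).
  assert (Ev : kerm (d ∘ q) ∘ v = p ∘ inr B X) by apply ker_lift_spec.
  assert (Hupi : u ∘ pi = xi).
  { apply (kernel_mono Hk). rewrite comp_assoc, Eu, <- comp_assoc, Epi, comp_assoc, Hqp.
    symmetry; exact Hxi. }
  assert (Huv : u ∘ v = idm X).
  { apply (kernel_mono Hk).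
    rewrite comp_assoc, Eu, <- comp_assoc, Ev, comp_assoc, Hqp, copair_inr, comp_id_r.
    reflexivity. }
  assert (Hmker : m ∘ kerm (d ∘ q) = pair k (h ∘ inr B X) ∘ u).
  { apply (regular_epi_epi Rpi).
    rewrite <- !comp_assoc, Epi, Hupi, comp_assoc, Hmp. apply pair_ext.
    - rewrite !comp_assoc, !pair_pr1. symmetry; exact Hxi.
    - rewrite !comp_assoc, !pair_pr2. exact Hh. }
  assert (Umono : is_mono u).
  { intros t x y E. apply kerm_mono, Hm.
    rewrite !comp_assoc, Hmker, <- !comp_assoc, E. reflexivity. }
  exists u. split; [|exact Eu].
  exists v. split; [|exact Huv].
  apply Umono. rewrite comp_assoc, Huv, comp_id_l, comp_id_r. reflexivity.
Qed.

Lemma image_projection_iso : is_iso q.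
Proof.
  destruct image_kernel_comparison_iso as [u [Uiso Eu]].
  apply (@sa_protomodular C) with (k := kerm (d ∘ q)) (d := d ∘ q) (e := p ∘ inl B X)
    (k' := k) (d' := d) (e' := e) (u := u) (w := idm B).
  - apply kerm_is_kernel.
  - rewrite comp_assoc, Hdqp. apply copair_inl.
  - exact Hk.
  - exact Hde.
  - symmetry; exact Eu.
  - rewrite comp_id_l. reflexivity.
  - rewrite comp_assoc, Hqp, copair_inl, comp_id_r. reflexivity.
  - exact Uiso.
  - apply is_iso_idm.
Qed.

End SemidirectProductFactor.

(* [A] is the quotient of [B + X] forcing [kappa B X = inr B X ∘ xi]: the image of
   [pair (copair e k) h] projects isomorphically onto [A] by the split short five lemma. *)
Lemma semidirect_product_factor (C : SemiAbelianCategory) (B X A T : C)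
  (xi : hom (flat B X) X) (k : hom X A) (d : hom A B) (e : hom B A) (h : hom (coprod B X) T) :
  is_semidirect_product xi k d e -> h ∘ kappa B X = h ∘ inr B X ∘ xi ->
  exists c : hom A T, c ∘ e = h ∘ inl B X /\ c ∘ k = h ∘ inr B X.
Proof.
  intros [Hk [Hde Hxi]] Hh.
  destruct (image_factorization (pair (copair e k) h)) as [R [p [m [Hp [Hm Hmp]]]]].
  destruct (image_projection_iso Hk Hde Hxi Hh Hp Hm Hmp) as [qi [Hl _]].
  assert (Hqp : pr1 A T ∘ m ∘ p = copair e k) by (rewrite <- comp_assoc, Hmp; apply pair_pr1).
  exists (pr2 A T ∘ m ∘ qi).
  assert (Hc : pr2 A T ∘ m ∘ qi ∘ copair e k = h).
  { rewrite <- Hqp, comp_assoc, <- (comp_assoc _ qi), Hl, comp_id_r, <- comp_assoc, Hmp.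
    apply pair_pr2. }
  rewrite <- Hc, <- !comp_assoc, copair_inl, copair_inr. split; reflexivity.
Qed.

Section MonoCoveringKernel.
Variable C : SemiAbelianCategory.
Variables (M Q Y : C) (mu : hom M Q) (r : hom Q Y) (t : hom (ker r) M).
Hypotheses (Hmu : is_mono mu) (Ht : mu ∘ t = kerm r).
Variables (L : C) (l2 : hom L Q) (l1 : hom L M).
Hypothesis HL : is_pullback r (r ∘ mu) l2 l1.
Variables (K : C) (a1 a2 : hom K M).
Hypothesis HK : is_kernel_pair (r ∘ mu) a1 a2.
Variable v : hom K L.
Hypotheses (Hv2 : l2 ∘ v = mu ∘ a2) (Hv1 : l1 ∘ v = a1).

Lemma kernel_pair_comparison_kernel_iso :
  exists u : hom (ker a1) (ker l1), is_iso u /\ kerm l1 ∘ u = v ∘ kerm a1.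
Proof.
  assert (Hu : l1 ∘ (v ∘ kerm a1) = zmor _ M) by (rewrite comp_assoc, Hv1; apply kerm_zero).
  destruct (kernel_lift (kerm_is_kernel l1) Hu) as [u Eu].
  assert (Hz : r ∘ (l2 ∘ kerm l1) = zmor _ Y).
  { rewrite comp_assoc, (proj1 HL), <- comp_assoc, kerm_zero. apply zmor_comp_l. }
  destruct (kernel_lift (kerm_is_kernel r) Hz) as [z Ez].
  assert (Hy : (r ∘ mu) ∘ zmor (ker l1) M = (r ∘ mu) ∘ (t ∘ z)).
  { rewrite zmor_comp_l, !comp_assoc, <- (comp_assoc r mu t), Ht, kerm_zero.
    symmetry. apply zmor_comp_r. }
  destruct (pullback_lift HK Hy) as [y [Hy1 Hy2]].
  destruct (kernel_lift (kerm_is_kernel a1) Hy1) as [u' Eu'].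
  assert (Hvy : v ∘ y = kerm l1).
  { apply (pullback_ext HL).
    - rewrite comp_assoc, Hv2, <- comp_assoc, Hy2, comp_assoc, Ht. exact Ez.
    - rewrite comp_assoc, Hv1, Hy1. symmetry. apply kerm_zero. }
  exists u. split; [|exact Eu].
  exists u'. split.
  - apply kerm_mono. rewrite comp_assoc, Eu', comp_id_r.
    apply (pullback_ext HK).
    + rewrite comp_assoc, Hy1, zmor_comp_r. symmetry. apply kerm_zero.
    + rewrite comp_assoc, Hy2. apply Hmu.
      rewrite !comp_assoc, Ht, Ez, <- comp_assoc, Eu, comp_assoc, Hv2. reflexivity.
  - apply kerm_mono. rewrite comp_assoc, Eu, <- comp_assoc, Eu', Hvy, comp_id_r.
    reflexivity.
Qed.

Lemma kernel_pair_comparison_iso : is_iso v.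
Proof.
  destruct kernel_pair_comparison_kernel_iso as [u [Uiso Eu]].
  destruct (pullback_lift (q1 := idm M) (q2 := idm M) HK eq_refl) as [sK [HsK1 HsK2]].
  assert (Hmu' : r ∘ mu = (r ∘ mu) ∘ idm M) by (symmetry; apply comp_id_r).
  destruct (pullback_lift HL Hmu') as [sL [HsL2 HsL1]].
  apply (@sa_protomodular C) with (k := kerm a1) (d := a1) (e := sK)
    (k' := kerm l1) (d' := l1) (e' := sL) (u := u) (w := idm M).
  - apply kerm_is_kernel.
  - exact HsK1.
  - apply kerm_is_kernel.
  - exact HsL1.
  - symmetry; exact Eu.
  - rewrite comp_id_l; exact Hv1.
  - rewrite comp_id_r. apply (pullback_ext HL).
    + rewrite comp_assoc, Hv2, <- comp_assoc, HsK2, comp_id_r. symmetry; exact HsL2.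
    + rewrite comp_assoc, Hv1, HsK1, HsL1. reflexivity.
  - exact Uiso.
  - apply is_iso_idm.
Qed.

End MonoCoveringKernel.

(* The kernel pair of [r ∘ mu] and the pullback of [r] along [r ∘ mu] are split
   extensions of [M] with isomorphic kernels (both are [ker r], since it lies in [mu]).
   They are therefore isomorphic, so the pullback projection onto [Q], a regular epi,
   factors through [mu]. *)
Lemma mono_covering_kernel_iso (C : SemiAbelianCategory) (M Q Y : C)
  (mu : hom M Q) (r : hom Q Y) (t : hom (ker r) M) :
  is_mono mu -> is_regular_epi (r ∘ mu) -> mu ∘ t = kerm r -> is_iso mu.
Proof.
  intros Hmu Hs Ht.
  destruct (sa_pullback r (r ∘ mu)) as [L [l2 [l1 HL]]].
  destruct (sa_pullback (r ∘ mu) (r ∘ mu)) as [K [a1 [a2 HK]]].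
  assert (Hv : r ∘ (mu ∘ a2) = (r ∘ mu) ∘ a1)
    by (rewrite comp_assoc; symmetry; exact (proj1 HK)).
  destruct (pullback_lift HL Hv) as [v [Hv2 Hv1]].
  destruct (kernel_pair_comparison_iso Hmu Ht HL HK Hv2 Hv1) as [vi [_ Hvvi]].
  apply (mono_factor_regular_epi_iso (s := a2 ∘ vi) Hmu (regular_epi_pullback HL Hs)).
  rewrite comp_assoc, <- Hv2, <- comp_assoc, Hvvi, comp_id_r. reflexivity.
Qed.

Section FlatMapRegularEpi.
Variable C : SemiAbelianCategory.
Variables (B B' X : C) (g : hom B' B).
Variables (Q : C) (r : hom Q (coprod B X)) (p2 : hom Q B').
Hypothesis HQ : is_pullback (proj_act B X) g r p2.

Lemma pullback_proj_act_kernel (iota : hom (flat B X) Q) :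
  r ∘ iota = kappa B X -> p2 ∘ iota = zmor (flat B X) B' -> is_kernel iota p2.
Proof.
  intros Hr Hp2. split; [exact Hp2|].
  intros t x Hx.
  assert (Hrx : proj_act B X ∘ (r ∘ x) = zmor t B).
  { rewrite comp_assoc, (proj1 HQ), <- comp_assoc, Hx. apply zmor_comp_l. }
  destruct (kernel_lift (kerm_is_kernel (proj_act B X)) Hrx) as [w Hw].
  exists w. split.
  - apply (pullback_ext HQ).
    + rewrite comp_assoc, Hr. exact Hw.
    + rewrite comp_assoc, Hp2, Hx. apply zmor_comp_r.
  - intros w' <-. apply (kernel_mono (kerm_is_kernel (proj_act B X))).
    rewrite Hw, comp_assoc, Hr. reflexivity.
Qed.

Lemma pullback_comparison_regular_epi (j : hom (coprod B' X) Q) :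
  is_regular_epi g -> r ∘ j = coprod_map g (idm X) -> p2 ∘ j = proj_act B' X ->
  is_regular_epi j.
Proof.
  intros Hg Hr Hp2.
  destruct (image_factorization j) as [I [j' [mu [Hj' [Hmu <-]]]]].
  apply iso_comp_regular_epi; [exact Hj'|].
  apply (mono_covering_kernel_iso (t := j' ∘ inl B' X ∘ (p2 ∘ kerm r)) Hmu).
  - apply (regular_epi_cancel_r (f := j')). rewrite <- comp_assoc, Hr.
    apply coprod_map_regular_epi; exact Hg.
  - apply (pullback_ext HQ).
    + rewrite !comp_assoc, <- (comp_assoc r mu j'), Hr.
      unfold coprod_map at 1. rewrite copair_inl, <- (comp_assoc _ g p2), <- (proj1 HQ).
      rewrite <- !comp_assoc, kerm_zero. fold (zmor (ker r) (coprod B X)).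
      rewrite !zmor_comp_l. reflexivity.
    + rewrite !comp_assoc, <- (comp_assoc p2 mu j'), Hp2.
      unfold proj_act at 1. rewrite copair_inl, comp_id_l. reflexivity.
Qed.

End FlatMapRegularEpi.

(* [B ♭ X] is the kernel of the pullback [Q] of [proj_act B X] along [g], and the
   comparison [B' + X -> Q] is a regular epi (its image contains [ker r] and covers
   [B + X]); regular epis restrict to kernels. *)
Lemma flat_map_regular_epi (C : SemiAbelianCategory) (B B' X : C) (g : hom B' B) :
  is_regular_epi g -> is_regular_epi (flat_map g (idm X)).
Proof.
  intros Hg.
  destruct (sa_pullback (proj_act B X) g) as [Q [r [p2 HQ]]].
  assert (Hj : proj_act B X ∘ coprod_map g (idm X) = g ∘ proj_act B' X).
  { unfold proj_act. rewrite copair_comp_map, comp_copair, comp_id_l, !comp_id_r, !zmor_comp_l.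
      reflexivity. }
  destruct (pullback_lift HQ Hj) as [j [Hj1 Hj2]].
  assert (Hiota : proj_act B X ∘ kappa B X = g ∘ zmor (flat B X) B').
  { rewrite zmor_comp_l. apply kerm_zero. }
  destruct (pullback_lift HQ Hiota) as [iota [Hiota1 Hiota2]].
  apply (kernel_restriction_regular_epi (kerm_is_kernel (proj_act B' X))
           (pullback_proj_act_kernel HQ Hiota1 Hiota2) Hj2);
    [|exact (pullback_comparison_regular_epi HQ Hg Hj1 Hj2)].
  apply (pullback_ext HQ).
  - rewrite !comp_assoc, Hiota1, Hj1. apply flat_map_spec.
  - rewrite !comp_assoc, Hiota2, Hj2, zmor_comp_r. symmetry. apply kerm_zero.
Qed.

Section PrecrossedModule.
Variable C : SemiAbelianCategory.
Variables (B X : C) (partial : hom X B) (xi : hom (flat B X) X).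

Lemma action_equivariance :
  is_regular_epi partial -> xi ∘ flat_map partial (idm X) = chi X ->
  partial ∘ xi = chi B ∘ flat_map (idm B) partial.
Proof.
  intros Hp Hchi. apply (regular_epi_epi (flat_map_regular_epi X Hp)).
  rewrite <- comp_assoc, Hchi, chi_flat_map, <- comp_assoc, flat_map_spec.
  unfold chi. rewrite !comp_assoc, copair_comp_map, !comp_copair, !comp_id_r, comp_id_l.
  reflexivity.
Qed.

Variables (A : C) (k : hom X A) (d : hom A B) (e : hom B A).
Hypothesis Hsdp : is_semidirect_product xi k d e.

Lemma precrossed_of_equivariance :
  partial ∘ xi = chi B ∘ flat_map (idm B) partial -> is_precrossed_module partial k e.
Proof.
  intros Heq.
  destruct (semidirect_product_factor (h := copair (idm B) partial) Hsdp) as [c [Hce Hck]].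
  - rewrite copair_inr, Heq. symmetry. apply chi_flat_map.
  - exists c. rewrite Hce, Hck, copair_inl, copair_inr. split; reflexivity.
Qed.

Lemma precrossed_commutator_zero :
  is_precrossed_module partial k e -> commutator_zero k e partial (idm B).
Proof. intros [c [Hce Hck]]. exact (commutator_zero_factor Hck Hce). Qed.

Lemma peiffer_condition :
  xi ∘ flat_map partial (idm X) = chi X ->
  commutator_zero (conj_k X) (conj_e X) k (e ∘ partial).
Proof.
  intros Hchi. destruct Hsdp as [_ [_ Hxi]].
  destruct (semidirect_product_factor (h := copair (e ∘ partial) k)
              (conj_is_semidirect_product X)) as [c [Hce Hck]].
  - rewrite copair_inr, <- Hchi, comp_assoc, Hxi, <- comp_assoc, flat_map_spec,
      comp_assoc, copair_comp_map, comp_id_r. reflexivity.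
  - rewrite copair_inl in Hce. rewrite copair_inr in Hck.
    exact (commutator_zero_factor Hck Hce).
Qed.

End PrecrossedModule.

Unset Implicit Arguments.

Theorem mainTheorem13 (C : SemiAbelianCategory) (B X : C)
  (partial : hom X B) (xi : hom (flat B X) X) :
  is_regular_epi partial ->
  is_internal_action xi ->
  xi ∘ flat_map partial (idm X) = chi X ->
  forall (A : C) (k : hom X A) (d : hom A B) (e : hom B A),
    is_semidirect_product xi k d e ->
    (* Precrossed Module Condition [partial, 1_B]_xi = 0 *)
    commutator_zero k e partial (idm B) /\
    (* Peiffer Condition [k, e ∘ partial]_{chi_X} = 0 *)
    commutator_zero (conj_k X) (conj_e X) k (e ∘ partial) /\
    is_precrossed_module partial k e /\
    partial ∘ xi = chi B ∘ flat_map (idm B) partial.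
Proof.
  intros Hp _ Hchi A k d e Hsdp.
  pose proof (action_equivariance Hp Hchi) as Heq.
  pose proof (precrossed_of_equivariance Hsdp Heq) as Hpre.
  split; [exact (precrossed_commutator_zero Hpre)|].
  split; [exact (peiffer_condition Hsdp Hchi)|].
  split; [exact Hpre | exact Heq].
Qed.
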